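(* Let $\mathbb{R}^{\mathbb{N}}_B$ be the ring of bounded real sequences, let $o=\{f\in\mathbb{R}^{\mathbb{N}}: \lim_{n\to\infty} n f(n)=0\}$, and let $\mathbb{R}_{\mathcal F}^{\circ}=\mathbb{R}^{\mathbb{N}}_B/o$. Then: (1) $\mathbb{R}_{\mathcal F}^{\circ}$ is a partially ordered ring; (2) there are nonzero infinitesimals in $\mathbb{R}_{\mathcal F}^{\circ}$; (3) $\mathbb{R}_{\mathcal F}^{\circ}$ has nonzero nilpotent elements and, as a consequence, it has zero-divisors.
   Context: $o$ is an ideal of the ring $\mathbb{R}^{\mathbb{N}}_B$ (pointwise operations). Elements of the quotient are classes $[x]_o$ with operations $[x]_o+[y]_o=[x+y]_o$, $[x]_o[y]_o=[xy]_o$, and order $[x]_o\le_o[y]_o$ iff there exist $z\in o$ and $\bar n\in\mathbb{N}$ with $x_n\le y_n+z_n$ for all $n\ge\bar n$. The reals embed via constant sequences. For an ordered ring $R\supseteq\mathbb{R}$, an element $r\in R$ is infinitesimal iff $-1/n\le r\le 1/n$ for all $n\in\mathbb{N}$. *)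

From Stdlib Require Export Reals Lra.
Open Scope R_scope.

Definition seqR := nat -> R.

Definition bounded (x : seqR) : Prop := exists M : R, forall n, Rabs (x n) <= M.

Definition sadd (x y : seqR) : seqR := fun n => x n + y n.
Definition smul (x y : seqR) : seqR := fun n => x n * y n.
Definition sopp (x : seqR) : seqR := fun n => - x n.
Definition scst (r : R) : seqR := fun _ => r.
Definition spow (x : seqR) (k : nat) : seqR := fun n => x n ^ k.

Definition in_o (f : seqR) : Prop := Un_cv (fun n => INR n * f n) 0.

(* equality in the quotient R^N_B / o : [x]_o = [y]_o *)
Definition eqo (x y : seqR) : Prop := in_o (fun n => x n - y n).

Definition leo (x y : seqR) : Prop :=
  exists z, in_o z /\ exists N : nat, forall n, (N <= n)%nat -> x n <= y n + z n.

Definition infinitesimal_o (x : seqR) : Prop :=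
  forall n : nat,
    leo (sopp (scst (1 / INR (S n)))) x /\ leo x (scst (1 / INR (S n))).

From Stdlib Require Import Lia.

(* The condition n f(n) -> 0 is preserved by sums and by multiplication with
   bounded sequences, and, being a limit, forces boundedness; so o is an ideal
   of the bounded sequences.  [x] <=_o [y] says that x <= y eventually, up to an
   error in o: errors add up under transitivity and, weighted by the bounds of
   the factors, under products.  The sequence 1/(n+1) is not in o, since
   n/(n+1) -> 1, yet it is eventually below every 1/k, and its square lies in o
   because n/(n+1)^2 <= 1/(n+1) -> 0. *)

Definition eventually (P : nat -> Prop) : Prop :=
  exists N, forall n, (N <= n)%nat -> P n.

Lemma eventually_forall (P : nat -> Prop) : (forall n, P n) -> eventually P.
Proof. intros HP. exists 0%nat. intros n _. apply HP. Qed.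

Lemma eventually_and (P Q : nat -> Prop) :
  eventually P -> eventually Q -> eventually (fun n => P n /\ Q n).
Proof.
  intros [NP HP] [NQ HQ]. exists (Nat.max NP NQ). intros n Hn.
  split; [apply HP | apply HQ]; lia.
Qed.

Lemma eventually_mono (P Q : nat -> Prop) :
  (forall n, P n -> Q n) -> eventually P -> eventually Q.
Proof. intros HPQ [N HP]. exists N. auto. Qed.

Lemma bound_nonneg (x : seqR) (M : R) : (forall n, Rabs (x n) <= M) -> 0 <= M.
Proof. intros Hx. specialize (Hx 0%nat). pose proof (Rabs_pos (x 0%nat)). lra. Qed.

Lemma bounded_cst (r : R) : bounded (scst r).
Proof. exists (Rabs r). intros n. apply Rle_refl. Qed.

Lemma bounded_add (x y : seqR) : bounded x -> bounded y -> bounded (sadd x y).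
Proof.
  intros [Mx Hx] [My Hy]. exists (Mx + My). intros n.
  eapply Rle_trans; [apply Rabs_triang | apply Rplus_le_compat; auto].
Qed.

Lemma bounded_opp (x : seqR) : bounded x -> bounded (sopp x).
Proof. intros [M Hx]. exists M. intros n. unfold sopp. rewrite Rabs_Ropp. auto. Qed.

Lemma bounded_mul (x y : seqR) : bounded x -> bounded y -> bounded (smul x y).
Proof.
  intros [Mx Hx] [My Hy]. exists (Mx * My). intros n. unfold smul.
  rewrite Rabs_mult. apply Rmult_le_compat; auto using Rabs_pos.
Qed.

Lemma Un_cv_const (c : R) : Un_cv (fun _ => c) c.
Proof.
  intros eps Heps. exists 0%nat. intros n _.
  unfold Rdist. rewrite Rminus_diag, Rabs_R0. exact Heps.
Qed.

Lemma Un_cv0_dominated (u v : nat -> R) :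
  Un_cv u 0 -> eventually (fun n => Rabs (v n) <= Rabs (u n)) -> Un_cv v 0.
Proof.
  intros Hu [N Hvu] eps Heps. destruct (Hu eps Heps) as [Nu HNu].
  exists (Nat.max N Nu). intros n Hn.
  specialize (HNu n ltac:(lia)). specialize (Hvu n ltac:(lia)).
  unfold Rdist in *. rewrite Rminus_0_r in *. lra.
Qed.

Lemma in_o_zero : in_o (scst 0).
Proof.
  apply (Un_cv_ext (fun _ => 0)); [intros n; unfold scst; ring | apply Un_cv_const].
Qed.

Lemma in_o_add (f g : seqR) : in_o f -> in_o g -> in_o (sadd f g).
Proof.
  intros Hf Hg. unfold in_o. rewrite <- (Rplus_0_r 0).
  apply (Un_cv_ext (fun n => INR n * f n + INR n * g n)).
  - intros n. unfold sadd. ring.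
  - exact (CV_plus _ _ _ _ Hf Hg).
Qed.

Lemma in_o_dominated (f g : seqR) (C : R) :
  in_o f -> eventually (fun n => Rabs (g n) <= C * Rabs (f n)) -> in_o g.
Proof.
  intros Hf Hgf.
  assert (HCf : Un_cv (fun n => C * (INR n * f n)) 0).
  { rewrite <- (Rmult_0_r C). exact (CV_mult _ _ _ _ (Un_cv_const C) Hf). }
  apply (Un_cv0_dominated _ _ HCf). revert Hgf. apply eventually_mono.
  intros n Hn. pose proof (pos_INR n).
  apply Rle_trans with (C * Rabs (INR n * f n)).
  - rewrite !Rabs_mult, (Rabs_pos_eq (INR n)) by lra. nra.
  - rewrite (Rabs_mult C). apply Rmult_le_compat_r; [apply Rabs_pos | apply Rle_abs].
Qed.

Lemma in_o_opp (f : seqR) : in_o f -> in_o (sopp f).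
Proof.
  intros Hf. apply (in_o_dominated f _ 1 Hf), eventually_forall. intros n.
  unfold sopp. rewrite Rabs_Ropp. lra.
Qed.

Lemma in_o_abs (f : seqR) : in_o f -> in_o (fun n => Rabs (f n)).
Proof.
  intros Hf. apply (in_o_dominated f _ 1 Hf), eventually_forall. intros n.
  rewrite Rabs_Rabsolu. lra.
Qed.

Lemma in_o_mul_bounded (x f : seqR) : bounded x -> in_o f -> in_o (smul x f).
Proof.
  intros [M Hx] Hf. apply (in_o_dominated f _ M Hf), eventually_forall. intros n.
  unfold smul. rewrite Rabs_mult. apply Rmult_le_compat_r; auto using Rabs_pos.
Qed.

(* The limit n f(n) -> 0 bounds |f(n)| <= |n f(n)| for n >= 1; only f(0) escapes. *)
Lemma in_o_bounded (f : seqR) : in_o f -> bounded f.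
Proof.
  intros Hf. destruct (maj_by_pos (fun n => INR n * f n) (exist _ 0 Hf)) as [L [_ HL]].
  exists (L + Rabs (f 0%nat)). intros [|m].
  - pose proof (HL 0%nat). pose proof (Rabs_pos (INR 0 * f 0%nat)). lra.
  - specialize (HL (S m)). pose proof (Rabs_pos (f 0%nat)).
    pose proof (Rabs_pos (f (S m))). pose proof (pos_INR m).
    rewrite Rabs_mult, (Rabs_pos_eq (INR (S m))), S_INR in HL by apply pos_INR.
    nra.
Qed.

Lemma eqo_sym (x y : seqR) : eqo x y -> eqo y x.
Proof.
  intros Hxy. apply (in_o_dominated _ _ 1 Hxy), eventually_forall. intros n.
  rewrite Rabs_minus_sym. lra.
Qed.

Lemma leo_of_eventually_le (x y : seqR) :
  eventually (fun n => x n <= y n) -> leo x y.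
Proof.
  intros Hxy. exists (scst 0). split; [exact in_o_zero |].
  revert Hxy. apply eventually_mono. intros n. unfold scst. lra.
Qed.

Lemma leo_refl (x : seqR) : leo x x.
Proof. apply leo_of_eventually_le, eventually_forall. intros n. apply Rle_refl. Qed.

Lemma leo_trans (x y w : seqR) : leo x y -> leo y w -> leo x w.
Proof.
  intros [z1 [Hz1 Hxy]] [z2 [Hz2 Hyw]]. exists (sadd z1 z2).
  split; [apply in_o_add; assumption |].
  generalize (eventually_and _ _ Hxy Hyw). apply eventually_mono.
  intros n [H1 H2]. unfold sadd. lra.
Qed.

Lemma leo_antisym (x y : seqR) : leo x y -> leo y x -> eqo x y.
Proof.
  intros [z1 [Hz1 Hxy]] [z2 [Hz2 Hyx]].
  apply (in_o_dominated _ _ 1 (in_o_add _ _ (in_o_abs _ Hz1) (in_o_abs _ Hz2))).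
  generalize (eventually_and _ _ Hxy Hyx). apply eventually_mono.
  intros n [H1 H2]. unfold sadd.
  pose proof (Rle_abs (z1 n)). pose proof (Rle_abs (z2 n)).
  pose proof (Rabs_pos (z1 n)). pose proof (Rabs_pos (z2 n)).
  rewrite Rmult_1_l, (Rabs_pos_eq (Rabs (z1 n) + Rabs (z2 n))) by lra.
  apply Rabs_le. lra.
Qed.

Lemma leo_eqo_compat (x x' y y' : seqR) :
  eqo x x' -> eqo y y' -> leo x y -> leo x' y'.
Proof.
  intros Hx Hy [z [Hz Hxy]].
  exists (sadd (sadd z (fun n => x' n - x n)) (fun n => y n - y' n)). split.
  - apply in_o_add; [apply in_o_add; [exact Hz | exact (eqo_sym _ _ Hx)] | exact Hy].
  - revert Hxy. apply eventually_mono. intros n Hn. unfold sadd. lra.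
Qed.

Lemma leo_add_r (x y w : seqR) : leo x y -> leo (sadd x w) (sadd y w).
Proof.
  intros [z [Hz Hxy]]. exists z. split; [exact Hz |].
  revert Hxy. apply eventually_mono. intros n Hn. unfold sadd. lra.
Qed.

(* If x, y are at least -a, -b and at most M in size, a negative product is
   carried by one factor of size <= M and the other of size <= a or <= b. *)
Lemma mul_ge_neg_bound (x y a b M : R) :
  Rabs x <= M -> Rabs y <= M -> 0 <= x + a -> 0 <= y + b ->
  0 <= x * y + M * (Rabs a + Rabs b).
Proof.
  intros Hx Hy Ha Hb.
  pose proof (Rle_abs a). pose proof (Rle_abs b).
  pose proof (Rabs_pos a). pose proof (Rabs_pos b).
  destruct (Rle_dec 0 x), (Rle_dec 0 y).
  - rewrite Rabs_pos_eq in Hx by lra. nra.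
  - rewrite Rabs_pos_eq in Hx by lra. nra.
  - rewrite Rabs_pos_eq in Hy by lra. nra.
  - rewrite Rabs_left in Hx by lra. nra.
Qed.

Lemma leo_mul_nonneg (x y : seqR) :
  bounded x -> bounded y -> leo (scst 0) x -> leo (scst 0) y ->
  leo (scst 0) (smul x y).
Proof.
  intros [Mx Hx] [My Hy] [z1 [Hz1 Hx0]] [z2 [Hz2 Hy0]].
  pose proof (bound_nonneg _ _ Hx). pose proof (bound_nonneg _ _ Hy).
  exists (fun n => (Mx + My) * (Rabs (z1 n) + Rabs (z2 n))). split.
  - apply (in_o_dominated _ _ (Mx + My) (in_o_add _ _ (in_o_abs _ Hz1) (in_o_abs _ Hz2))).
    apply eventually_forall. intros n. unfold sadd.
    rewrite Rabs_mult, (Rabs_pos_eq (Mx + My)) by lra. apply Rle_refl.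
  - generalize (eventually_and _ _ Hx0 Hy0). apply eventually_mono.
    intros n [H1 H2]. unfold scst, smul in *.
    specialize (Hx n). specialize (Hy n).
    apply mul_ge_neg_bound; lra.
Qed.

Definition harmonic : seqR := fun n => / INR (S n).

Lemma harmonic_pos (n : nat) : 0 < harmonic n.
Proof. apply Rinv_0_lt_compat, lt_0_INR. lia. Qed.

Lemma harmonic_le_inv (k n : nat) : (k <= n)%nat -> harmonic n <= / INR (S k).
Proof.
  intros Hkn. apply Rinv_le_contravar; [apply lt_0_INR; lia | apply le_INR; lia].
Qed.

Lemma harmonic_le_1 (n : nat) : harmonic n <= 1.
Proof. rewrite <- Rinv_1, <- INR_1. apply harmonic_le_inv. lia. Qed.

Lemma harmonic_bounded : bounded harmonic.
Proof.
  exists 1. intros n. rewrite Rabs_pos_eq by (apply Rlt_le, harmonic_pos).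
  apply harmonic_le_1.
Qed.

Lemma harmonic_cv0 : Un_cv harmonic 0.
Proof.
  apply (cv_infty_cv_0 (fun n => INR (S n))). intros M.
  destruct (INR_archimed 1 M Rlt_0_1) as [N HN]. exists N. intros n Hn.
  assert (INR N <= INR (S n)) by (apply le_INR; lia). lra.
Qed.

Lemma INR_mul_harmonic (n : nat) : INR n * harmonic n = 1 - harmonic n.
Proof.
  unfold harmonic. rewrite S_INR. pose proof (pos_INR n). field. lra.
Qed.

Lemma harmonic_neq0 : ~ eqo harmonic (scst 0).
Proof.
  intros H0.
  assert (Hcv1 : Un_cv (fun n => INR n * (harmonic n - scst 0 n)) 1).
  { rewrite <- Rminus_0_r.
    apply (Un_cv_ext (fun n => 1 - harmonic n)).
    - intros n. unfold scst. rewrite Rminus_0_r. symmetry. apply INR_mul_harmonic.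
    - exact (CV_minus _ _ _ _ (Un_cv_const 1) harmonic_cv0). }
  pose proof (UL_sequence _ _ _ Hcv1 H0). lra.
Qed.

Lemma harmonic_sq_eqo0 : eqo (smul harmonic harmonic) (scst 0).
Proof.
  apply (Un_cv0_dominated _ _ harmonic_cv0), eventually_forall. intros n.
  unfold smul, scst. pose proof (harmonic_pos n). pose proof (harmonic_le_1 n).
  rewrite Rminus_0_r, <- Rmult_assoc, INR_mul_harmonic.
  rewrite !Rabs_pos_eq by nra. nra.
Qed.

Lemma harmonic_nilpotent : eqo (spow harmonic 2) (scst 0).
Proof.
  apply (in_o_dominated _ _ 1 harmonic_sq_eqo0), eventually_forall. intros n.
  unfold spow, smul. simpl. rewrite Rmult_1_r, Rmult_1_l. apply Rle_refl.
Qed.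

Lemma harmonic_infinitesimal : infinitesimal_o harmonic.
Proof.
  intros k. unfold Rdiv. rewrite Rmult_1_l. split.
  - apply leo_of_eventually_le, eventually_forall. intros n.
    unfold sopp, scst. pose proof (harmonic_pos n).
    pose proof (harmonic_pos k). unfold harmonic in *. lra.
  - apply leo_of_eventually_le. exists k. intros n Hn. apply harmonic_le_inv, Hn.
Qed.

Theorem mainTheorem2 :
  (* (1) R_F = R^N_B / o is a partially ordered ring *)
  ( (* R^N_B is a subring of R^N containing the constants *)
    (forall r, bounded (scst r)) /\
    (forall x y, bounded x -> bounded y -> bounded (sadd x y)) /\
    (forall x, bounded x -> bounded (sopp x)) /\
    (forall x y, bounded x -> bounded y -> bounded (smul x y)) /\
    (* o is an ideal of R^N_B, so the quotient is a ring *)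
    (forall f, in_o f -> bounded f) /\
    in_o (scst 0) /\
    (forall f g, in_o f -> in_o g -> in_o (sadd f g)) /\
    (forall f, in_o f -> in_o (sopp f)) /\
    (forall x f, bounded x -> in_o f -> in_o (smul x f)) /\
    (* <=_o is well defined on classes *)
    (forall x x' y y', bounded x -> bounded x' -> bounded y -> bounded y' ->
       eqo x x' -> eqo y y' -> leo x y -> leo x' y') /\
    (* <=_o is a partial order on the quotient *)
    (forall x, bounded x -> leo x x) /\
    (forall x y z, bounded x -> bounded y -> bounded z ->
       leo x y -> leo y z -> leo x z) /\
    (forall x y, bounded x -> bounded y -> leo x y -> leo y x -> eqo x y) /\
    (* compatibility with the ring operations *)
    (forall x y z, bounded x -> bounded y -> bounded z ->
       leo x y -> leo (sadd x z) (sadd y z)) /\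
    (forall x y, bounded x -> bounded y ->
       leo (scst 0) x -> leo (scst 0) y -> leo (scst 0) (smul x y)) ) /\
  (* (2) there are nonzero infinitesimals *)
  (exists x, bounded x /\ ~ eqo x (scst 0) /\ infinitesimal_o x) /\
  (* (3) nonzero nilpotents, hence zero-divisors *)
  (exists x k, bounded x /\ ~ eqo x (scst 0) /\ eqo (spow x k) (scst 0)) /\
  (exists x y, bounded x /\ bounded y /\ ~ eqo x (scst 0) /\ ~ eqo y (scst 0) /\
     eqo (smul x y) (scst 0)).
Proof.
  split; [repeat split | split; [| split]].
  - exact bounded_cst.
  - exact bounded_add.
  - exact bounded_opp.
  - exact bounded_mul.
  - exact in_o_bounded.
  - exact in_o_zero.
  - exact in_o_add.
  - exact in_o_opp.
  - exact in_o_mul_bounded.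
  - intros x x' y y' _ _ _ _. exact (leo_eqo_compat x x' y y').
  - intros x _. exact (leo_refl x).
  - intros x y w _ _ _. exact (leo_trans x y w).
  - intros x y _ _. exact (leo_antisym x y).
  - intros x y w _ _ _. exact (leo_add_r x y w).
  - exact leo_mul_nonneg.
  - exists harmonic.
    exact (conj harmonic_bounded (conj harmonic_neq0 harmonic_infinitesimal)).
  - exists harmonic, 2%nat.
    exact (conj harmonic_bounded (conj harmonic_neq0 harmonic_nilpotent)).
  - exists harmonic, harmonic.
    repeat split; auto using harmonic_bounded, harmonic_neq0, harmonic_sq_eqo0.
Qed.
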